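(* Let $\sigma\ge 2$, $k\ge 1$, let $U$ be any rotation of a $\sigma$-ary de Bruijn cycle of order $k$, and let $w_{\mathrm{lin}}=U\,U[0..k-2]$, a word of length $\sigma^k+(k-1)$. Then $\operatorname{sre}(w_{\mathrm{lin}})=\sigma^k$.
   Context: A $\sigma$-ary de Bruijn cycle of order $k$ is a cyclic word of length $\sigma^k$ over an alphabet $\Sigma$ of size $\sigma$ in which every word of $\Sigma^k$ occurs exactly once as a cyclic length-$k$ window. Strings are $0$-indexed; $U[0..k-2]$ is empty when $k=1$. For a string $w$, a substring $x$ (possibly empty) is right-maximal if there are distinct $a,b\in\Sigma$ with $xa$ and $xb$ both substrings of $w$; the set of right-extensions is $E_r(w)=\{xa : a\in\Sigma,\ \exists b\ne a \text{ with } xa, xb \text{ substrings of } w\}$. The set of super-maximal extensions is $S_r(w)=\{x\in E_r(w): \text{for all } y\in E_r(w),\ y=zx \Rightarrow z \text{ is empty}\}$, i.e. right-extensions that are not proper suffixes of other right-extensions, and $\operatorname{sre}(w)=|S_r(w)|$. *)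

From mathcomp Require Import all_boot.
Set Implicit Arguments. Unset Strict Implicit. Unset Printing Implicit Defensive.

Definition cyc_window (T : Type) (k : nat) (U : seq T) (i : nat) : seq T :=
  if U is x :: _ then [seq nth x U ((i + j) %% size U) | j <- iota 0 k] else [::].

Definition de_bruijn_cycle (sigma k : nat) (U : seq 'I_sigma) : Prop :=
  size U = sigma ^ k /\
  forall x : seq 'I_sigma, size x = k ->
    count (fun i => cyc_window k U i == x) (iota 0 (size U)) = 1.

Definition substrings (T : eqType) (w : seq T) : seq (seq T) :=
  undup [seq take l (drop i w) | i <- iota 0 (size w).+1, l <- iota 0 (size w).+1].

Definition is_right_ext (sigma : nat) (w y : seq 'I_sigma) : bool :=
  match y with
  | z :: t =>
      let x := belast z t in
      let a := last z t in
      [exists b : 'I_sigma, [&& b != a, infix (rcons x a) w & infix (rcons x b) w]]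
  | [::] => false
  end.

Definition right_exts (sigma : nat) (w : seq 'I_sigma) : seq (seq 'I_sigma) :=
  [seq y <- substrings w | is_right_ext w y].

Definition super_max_exts (sigma : nat) (w : seq 'I_sigma) : seq (seq 'I_sigma) :=
  [seq x <- right_exts w |
     all (fun y => suffix x y ==> (y == x)) (right_exts w)].

Definition sre (sigma : nat) (w : seq 'I_sigma) : nat := size (super_max_exts w).
Arguments de_bruijn_cycle : clear implicits.

From mathcomp Require Import all_boot zify.
Set Implicit Arguments. Unset Strict Implicit. Unset Printing Implicit Defensive.

(* Read linearly, w = U U[0..k-2] contains every word of length k, and any two
   of its length-k windows at distinct positions differ.  Hence a factor of
   length >= k occurs only once and has a unique right extension, while every
   word of length < k can be followed by every letter: the right-extensions
   are exactly the nonempty words of length <= k, and the super-maximal ones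
   are the sigma^k words of length exactly k. *)

Lemma count_eq1_inj (T : eqType) (P : pred T) (s : seq T) i j :
  count P s = 1 -> i \in s -> j \in s -> P i -> P j -> i = j.
Proof.
move=> cnt1 si sj Pi Pj; have [//|neq_ij] := eqVneq i j.
suff : size [:: i; j] <= count P s by rewrite cnt1.
rewrite -size_filter; apply: uniq_leq_size => [|z]; first by rewrite /= inE neq_ij.
by rewrite !inE mem_filter => /orP[]/eqP->; apply/andP.
Qed.

Lemma count_iota_periodic (P : pred nat) n r :
  r <= n -> (forall i, P (i + n) = P i) -> count P (iota r n) = count P (iota 0 n).
Proof.
move=> le_rn Pn.
have -> : iota r n = iota r (n - r) ++ iota (n + 0) r.
  by rewrite addn0 -[n in iota n r](subnKC le_rn) -iotaD subnK.
have -> : iota 0 n = iota 0 r ++ iota r (n - r) by rewrite -iotaD subnKC.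
rewrite iotaDl !count_cat count_map addnC; congr (_ + _).
by apply: eq_count => i; rewrite /= addnC Pn.
Qed.

Lemma exists_neq (T : finType) (a : T) : 1 < #|T| -> exists b, b != a.
Proof.
move=> card_gt1; have /card_gt0P[b] : 0 < #|predC1 a| by rewrite cardC1; lia.
by rewrite inE; exists b.
Qed.

Lemma suffix_size_eq (T : eqType) (x y : seq T) :
  suffix x y -> size y <= size x -> x = y.
Proof. by rewrite suffixE => /eqP + /eqP size_yx; rewrite size_yx drop0. Qed.

Lemma infix_substrings (T : eqType) (w y : seq T) : infix y w -> y \in substrings w.
Proof.
case/infixP=> s1 [s2 def_w]; rewrite /substrings mem_undup; apply/allpairsP.
exists (size s1, size y); split => /=.
- by rewrite inE mem_iota def_w !size_cat; lia.
- by rewrite inE mem_iota def_w !size_cat; lia.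
- by rewrite def_w drop_size_cat // take_size_cat.
Qed.

Lemma infix_window (T : eqType) (w y : seq T) :
  infix y w -> exists2 p, p + size y <= size w & take (size y) (drop p w) = y.
Proof.
case/infixP=> s1 [s2 ->]; exists (size s1).
  by rewrite !size_cat leq_add2l leq_addr.
by rewrite drop_size_cat // take_size_cat.
Qed.

Section CyclicWindows.

Variables (T : Type) (k : nat) (s : seq T).

Lemma size_cyc_window i : 0 < size s -> size (cyc_window k s i) = k.
Proof. by case: s => // x s' _; rewrite size_map size_iota. Qed.

Lemma cyc_windowDn i : cyc_window k s (i + size s) = cyc_window k s i.
Proof. by case: s => // x s'; apply: eq_map => j; rewrite addnAC modnDr. Qed.

Lemma nth_rot x0 r i :
  r <= size s -> i < size s -> nth x0 (rot r s) i = nth x0 s ((r + i) %% size s).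
Proof.
move=> le_r lt_i; rewrite nth_cat size_drop; case: ltnP => [lt_ir | le_ri].
  by rewrite nth_drop modn_small //; lia.
rewrite nth_take; last by lia.
have -> : r + i = (i - (size s - r)) + size s by lia.
by rewrite modnDr modn_small //; lia.
Qed.

Lemma cyc_window_rot r i :
  r <= size s -> cyc_window k (rot r s) i = cyc_window k s (r + i).
Proof.
case def_s: s => [|x s'] le_r; first by rewrite rot_oversize.
rewrite -def_s in le_r; have s_gt0 : 0 < size s by rewrite def_s.
rewrite -def_s; case def_rs: (rot r s) => [|y rs'].
  by move/(congr1 size): def_rs; rewrite size_rot def_s.
rewrite /cyc_window -def_rs def_s -def_s size_rot; apply: eq_map => j.
rewrite def_rs (set_nth_default x) -?def_rs ?size_rot ?ltn_pmod //.
by rewrite nth_rot ?ltn_pmod // modnDmr addnA.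
Qed.

Lemma take_drop_linearized p :
  k <= size s -> p < size s ->
  take k (drop p (s ++ take (k - 1) s)) = cyc_window k s p.
Proof.
case def_s: s => [|x s'] //; rewrite -def_s => le_ks lt_ps.
have size_w : size (s ++ take (k - 1) s) = size s + (k - 1).
  by rewrite size_cat size_take; case: ltnP; lia.
have size_win : size (take k (drop p (s ++ take (k - 1) s))) = k.
  by rewrite size_takel // size_drop size_w; lia.
apply: (@eq_from_nth _ x); first by rewrite size_win size_cyc_window // def_s.
move=> j; rewrite size_win => lt_jk.
rewrite nth_take // nth_drop /cyc_window def_s -def_s (nth_map 0) ?size_iota //.
rewrite nth_iota // add0n nth_cat; case: ltnP => [lt_pj | le_pj].
  by rewrite modn_small.
rewrite nth_take; last by lia.
by rewrite -[in RHS](subnK le_pj) modnDr modn_small //; lia.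
Qed.

End CyclicWindows.

Lemma de_bruijn_cycle_rot sigma k (V : seq 'I_sigma) r :
  de_bruijn_cycle sigma k V -> de_bruijn_cycle sigma k (rot r V).
Proof.
move=> [size_V dbV]; rewrite rot_minn; set r' := minn r _.
have le_r : r' <= size V by apply: geq_minr.
split=> [|x size_x]; first by rewrite size_rot.
rewrite size_rot -(dbV x size_x).
under eq_count => i do rewrite cyc_window_rot //.
rewrite -(@count_iota_periodic (fun i => cyc_window k V i == x) _ _ le_r).
  have -> : iota r' (size V) = map (addn r') (iota 0 (size V)) by rewrite -iotaDl addn0.
  by rewrite count_map.
by move=> i /=; rewrite cyc_windowDn.
Qed.

Lemma size_uniq_words (T : finType) (s : seq (seq T)) n :
  uniq s -> (forall y, (y \in s) = (size y == n)) -> size s = #|T| ^ n.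
Proof.
move=> uniq_s mem_s; rewrite -card_tuple cardE -(size_map val).
apply: perm_size; apply: uniq_perm => //.
  by rewrite map_inj_uniq ?enum_uniq //; apply: val_inj.
move=> y; rewrite mem_s; apply/eqP/mapP => [size_y | [t _ ->]]; last exact: size_tuple.
by exists (Tuple (introT eqP size_y)); rewrite ?mem_enum.
Qed.

Section LinearDeBruijn.

Variables (sigma k : nat) (w : seq 'I_sigma).
Hypotheses (sigma_gt1 : 1 < sigma) (k_gt0 : 0 < k).
Hypothesis w_covers : forall x, size x = k -> infix x w.
Hypothesis w_windows_inj : forall p q, p + k <= size w -> q + k <= size w ->
  take k (drop p w) = take k (drop q w) -> p = q.

Lemma infix_short x : size x <= k -> infix x w.
Proof.
case: x => [|a t] size_x; first exact: infix0s.
apply: infix_trans (prefix_infix _ (nseq (k - size (a :: t)) a)) (w_covers _).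
by rewrite size_cat size_nseq subnKC.
Qed.

Lemma rcons_infix_inj x a b :
  k <= size x -> infix (rcons x a) w -> infix (rcons x b) w -> a = b.
Proof.
move=> le_kx /infix_window[p]; rewrite size_rcons => lt_p def_a.
move=> /infix_window[q]; rewrite size_rcons => lt_q def_b.
have le_k : k <= (size x).+1 by apply: leqW.
have eq_pq : p = q.
  apply: w_windows_inj.
  - by apply: leq_trans lt_p; rewrite leq_add2l.
  - by apply: leq_trans lt_q; rewrite leq_add2l.
  rewrite -[LHS](take_takel _ le_k) -[RHS](take_takel _ le_k) def_a def_b.
  by rewrite -!cats1 !takel_cat.
by move: def_a; rewrite eq_pq def_b => /rcons_inj[].
Qed.

Lemma mem_right_exts y : (y \in right_exts w) = (0 < size y <= k).
Proof.
rewrite /right_exts mem_filter; case: y => [|z t] //=; apply/andP/idP.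
  case=> /existsP[b /and3P[neq_b inf_a inf_b]] _; rewrite leqNgt; apply/negP => lt_kt.
  by move: neq_b; rewrite (rcons_infix_inj _ inf_a inf_b) ?eqxx // size_belast.
move=> le_tk; have [b neq_b] : exists b, b != last z t.
  by apply: exists_neq; rewrite card_ord.
split; last by apply: infix_substrings; apply: infix_short.
by apply/existsP; exists b; rewrite neq_b !infix_short // size_rcons size_belast.
Qed.

Lemma mem_super_max_exts y : (y \in super_max_exts w) = (size y == k).
Proof.
rewrite /super_max_exts mem_filter mem_right_exts.
apply/andP/eqP => [[/allP maxy] | size_y].
  case: y maxy => [|z t] // maxy /andP[_ le_tk]; apply/eqP; rewrite eqn_leq le_tk leqNgt.
  apply/negP => lt_tk; have := maxy (z :: z :: t).
  rewrite mem_right_exts suffix_cons eqseq_cons eqxx /= => /(_ lt_tk) /eqP.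
  by move/(congr1 size)/esym/n_Sn.
split; last by rewrite size_y k_gt0 /=.
apply/allP => y'; rewrite mem_right_exts => /andP[_ le_y'k]; apply/implyP => suf.
by rewrite (suffix_size_eq suf) ?size_y.
Qed.

Lemma sre_linear_de_bruijn : sre w = sigma ^ k.
Proof.
rewrite /sre -[sigma in RHS]card_ord.
apply: size_uniq_words; last exact: mem_super_max_exts.
by rewrite !filter_uniq ?undup_uniq.
Qed.

End LinearDeBruijn.

Section Linearization.

Variables (sigma k : nat) (U : seq 'I_sigma).
Hypotheses (sigma_gt1 : 1 < sigma) (k_gt0 : 0 < k).
Hypothesis dbU : de_bruijn_cycle sigma k U.

Local Notation w := (U ++ take (k - 1) U).

Lemma de_bruijn_size_gt : k < size U.
Proof. by case: dbU => -> _; apply: ltn_expl. Qed.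

Lemma cyc_window_inj i j : i < size U -> j < size U ->
  cyc_window k U i = cyc_window k U j -> i = j.
Proof.
move=> lt_i lt_j eq_ij; have [_ count_U] := dbU.
have U_gt0 : 0 < size U by apply: leq_ltn_trans de_bruijn_size_gt.
apply: (count_eq1_inj (count_U _ (size_cyc_window _ _ U_gt0))); rewrite ?mem_iota //.
by rewrite eq_ij.
Qed.

Lemma linearized_covers x : size x = k -> infix x w.
Proof.
move=> size_x; have [_ count_U] := dbU.
have /hasP[i] : has (fun i => cyc_window k U i == x) (iota 0 (size U)).
  by rewrite has_count count_U.
rewrite mem_iota => /andP[_ lt_i] /eqP <-.
rewrite -take_drop_linearized ?(ltnW de_bruijn_size_gt) //.
exact: infix_trans (infix_take _ _) (infix_drop _ _).
Qed.

Lemma linearized_windows_inj p q : p + k <= size w -> q + k <= size w ->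
  take k (drop p w) = take k (drop q w) -> p = q.
Proof.
have le_kU := ltnW de_bruijn_size_gt.
have size_w : size w = size U + (k - 1) by rewrite size_cat size_takel //; lia.
rewrite size_w => p_lt q_lt; have lt_p : p < size U by lia.
have lt_q : q < size U by lia.
by rewrite !take_drop_linearized //; apply: cyc_window_inj.
Qed.

End Linearization.

Theorem lemma5 (sigma k : nat) (V : seq 'I_sigma) (r : nat) :
  2 <= sigma -> 1 <= k -> de_bruijn_cycle sigma k V ->
  let U := rot r V in
  let w_lin := U ++ take (k - 1) U in
  sre w_lin = sigma ^ k.
Proof.
move=> sigma_gt1 k_gt0 dbV U w_lin.
have dbU : de_bruijn_cycle sigma k U by apply: de_bruijn_cycle_rot.
apply: sre_linear_de_bruijn => //.
  exact: linearized_covers.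
exact: linearized_windows_inj.
Qed.
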